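(* Let $N\ge 3$ and $M\ge 2$ be integers, let $\theta\in\mathbb{R}$, and let $\mathbf{h}=[h_1,\dots,h_N]^T\in\mathbb{C}^{N}$ be such that $\mathbf{h}$ is not a scalar multiple of $\mathbf{a}(\theta)$. Let $\alpha,\beta\in\mathbb{C}$, $P>0$, $\tau\in[0,1]$, $\sigma_R>0$, $c_3\in\mathbb{C}\setminus\{0\}$, $L\ge 1$, and set $\gamma_1=P\tau$, $\gamma_2=\frac{(1-\tau)P}{N-2}$, $Q=\frac{\sigma_R^2}{2|c_3|^2L}$. With $\mathbf{A}(\theta)=\mathbf{b}(\theta)\mathbf{a}(\theta)^H$, $\dot{\mathbf{A}}(\theta)=\frac{d}{d\theta}\mathbf{A}(\theta)$ and $\mathbf{R}_x=\gamma_1\mathbf{t}_1\mathbf{t}_1^H+\gamma_2\sum_{i=3}^{N}\mathbf{t}_i\mathbf{t}_i^H$, define $$\mathrm{CRB}(\theta)=\frac{\sigma_R^2\,\mathrm{Tr}(\mathbf{A}^H\mathbf{A}\mathbf{R}_x)}{2|c_3|^2L\left(\mathrm{Tr}(\mathbf{A}^H\mathbf{A}\mathbf{R}_x)\,\mathrm{Tr}(\dot{\mathbf{A}}^H\dot{\mathbf{A}}\mathbf{R}_x)-|\mathrm{Tr}(\dot{\mathbf{A}}^H\mathbf{A}\mathbf{R}_x)|^2\right)}.$$ Then $$\mathrm{CRB}(\theta)=\frac{Q}{\gamma_1\|\mathbf{b}'\|^2N|\alpha|^2+\gamma_2M\left(\|\mathbf{a}'\|^2-\dfrac{\left(\sum_{i=1}^{N}-f_i't_i\right)^2+\left(\sum_{i=1}^{N}f_i'r_i\right)^2}{K-\frac{1}{N}(T^2+R^2)}\right)},$$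 where $\|\mathbf{b}'\|^2=\frac{\pi^2\cos^2(\theta)M(M^2-1)}{12}$ and $\|\mathbf{a}'\|^2=\frac{\pi^2\cos^2(\theta)N(N^2-1)}{12}$ are the squared norms of the derivatives of $\mathbf{b}(\theta)$ and $\mathbf{a}(\theta)$ with respect to $\theta$.
   Context: Steering vectors: $\mathbf{a}(\theta)\in\mathbb{C}^N$ has $i$-th entry $a_i=e^{-jf_i}$ with $f_i=\pi\sin(\theta)\frac{N-(2i-1)}{2}$, $i=1,\dots,N$; $\mathbf{b}(\theta)\in\mathbb{C}^M$ has $m$-th entry $e^{-j\pi\sin(\theta)\frac{M-(2m-1)}{2}}$, $m=1,\dots,M$. Here $f_i'=\frac{df_i}{d\theta}=\pi\cos(\theta)\frac{N-(2i-1)}{2}$. Define $\tilde{\mathbf{a}}=\mathbf{a}/\|\mathbf{a}\|$, $\tilde{\mathbf{h}}=\frac{\mathbf{h}-(\tilde{\mathbf{a}}^H\mathbf{h})\tilde{\mathbf{a}}}{\|\mathbf{h}-(\tilde{\mathbf{a}}^H\mathbf{h})\tilde{\mathbf{a}}\|}$, $\mathbf{t}_1=\alpha\tilde{\mathbf{a}}+\beta\tilde{\mathbf{h}}$, and let $\mathbf{t}_3,\dots,\mathbf{t}_N$ be an orthonormal basis of the orthogonal complement of $\mathrm{span}\{\tilde{\mathbf{a}},\tilde{\mathbf{h}}\}$ in $\mathbb{C}^N$. Scalar quantities (distinct from the vectors $\mathbf{t}_i$): writing $h_i=|h_i|e^{j\phi_i}$, $r_i=\mathrm{Re}(e^{jf_i}h_i)=|h_i|\cos(f_i+\phi_i)$,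 $t_i=\mathrm{Im}(e^{jf_i}h_i)=|h_i|\sin(f_i+\phi_i)$, $k_i=|h_i|^2$, $R=\sum_{i=1}^N r_i$, $T=\sum_{i=1}^N t_i$, $K=\sum_{i=1}^N k_i$. *)

From HB Require Import structures.
From mathcomp Require Import all_boot all_order all_algebra.
From mathcomp Require Import all_classical all_reals all_analysis.
From mathcomp Require Import complex.

Set Implicit Arguments.
Unset Strict Implicit.
Unset Printing Implicit Defensive.

Import Order.TTheory GRing.Theory Num.Theory.
Local Open Scope ring_scope.
Local Open Scope complex_scope.

Section Defs.
Variable R : realType.
Local Notation C := (R[i]).

Definition expj (x : R) : C := Complex (cos x) (sin x).

(* f_i for the 1-based index i = k+1 (k : 'I_N, 0-based):
   f_i = pi sin(theta) (N - (2i-1)) / 2 *)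
Definition fcoef (N : nat) (theta : R) (k : nat) : R :=
  pi * sin theta * ((N%:R - (2 * k.+1 - 1)%:R) / 2).

Definition fcoef' (N : nat) (theta : R) (k : nat) : R :=
  pi * cos theta * ((N%:R - (2 * k.+1 - 1)%:R) / 2).

Definition steer (N : nat) (theta : R) : 'cV[C]_N :=
  \col_(k < N) expj (- fcoef N theta k).

Definition adjmx (m n : nat) (X : 'M[C]_(m, n)) : 'M[C]_(n, m) :=
  (map_mx (@conjc R) X)^T.

Definition cdot (n : nat) (u v : 'cV[C]_n) : C := (adjmx u *m v) 0 0.

Definition cnorm (n : nat) (v : 'cV[C]_n) : C := sqrtc (cdot v v).

Definition cderive (f : R -> C) (x : R) : C :=
  Complex (derive1 (fun t => @complex.Re R (f t)) x) (derive1 (fun t => @complex.Im R (f t)) x).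

Definition Amx (M N : nat) (theta : R) : 'M[C]_(M, N) :=
  steer M theta *m adjmx (steer N theta).

Definition dAmx (M N : nat) (theta : R) : 'M[C]_(M, N) :=
  \matrix_(m < M, i < N) cderive (fun x => Amx M N x m i) theta.


Definition cabs2 (z : C) : R := complex.Re z ^+ 2 + complex.Im z ^+ 2.

Definition atil (N : nat) (theta : R) : 'cV[C]_N :=
  (cnorm (steer N theta))^-1 *: steer N theta.

Definition htil (N : nat) (theta : R) (h : 'cV[C]_N) : 'cV[C]_N :=
  let w := h - cdot (atil N theta) h *: atil N theta in (cnorm w)^-1 *: w.

Definition t1vec (N : nat) (theta : R) (h : 'cV[C]_N) (alpha beta : C) :=
  alpha *: atil N theta + beta *: htil theta h.

(* R_x = gamma1 t1 t1^H + gamma2 sum_{i=3}^N t_i t_i^H, where the vectors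
   t_3, ..., t_N are given as t : 'I_(N-2) -> C^N (t k stands for t_{k+3}) *)
Definition Rxmx (N : nat) (theta : R) (h : 'cV[C]_N) (alpha beta : C)
    (gamma1 gamma2 : R) (t : 'I_(N - 2) -> 'cV[C]_N) : 'M[C]_N :=
  gamma1%:C *: (t1vec theta h alpha beta *m adjmx (t1vec theta h alpha beta))
  + gamma2%:C *: \sum_(k < N - 2) (t k *m adjmx (t k)).

Definition CRBden (M N : nat) (theta : R) (Rx : 'M[C]_N) (c3 : C) (L : nat) : C :=
  let A := Amx M N theta in
  let dA := dAmx M N theta in
  2 * `|c3| ^+ 2 * L%:R *
  (\tr (adjmx A *m A *m Rx) * \tr (adjmx dA *m dA *m Rx)
   - `|\tr (adjmx dA *m A *m Rx)| ^+ 2).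

Definition CRB (M N : nat) (theta : R) (Rx : 'M[C]_N) (sigmaR : R) (c3 : C)
    (L : nat) : C :=
  let A := Amx M N theta in
  (sigmaR ^+ 2)%:C * \tr (adjmx A *m A *m Rx) / CRBden M theta Rx c3 L.

(* r_i = Re(e^{j f_i} h_i), t_i = Im(e^{j f_i} h_i), k_i = |h_i|^2
   (k : 'I_N is the 0-based index, i = k+1) *)
Definition rcoef (N : nat) (theta : R) (h : 'cV[C]_N) (k : 'I_N) : R :=
  complex.Re (expj (fcoef N theta k) * h k 0).
Definition tcoef (N : nat) (theta : R) (h : 'cV[C]_N) (k : 'I_N) : R :=
  complex.Im (expj (fcoef N theta k) * h k 0).
Definition kcoef (N : nat) (h : 'cV[C]_N) (k : 'I_N) : R := cabs2 (h k 0).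

End Defs.

(* A = b a^H and dA/dtheta = b' a^H + b a'^H with b^H b' = 0, so the three traces in the
   CRB are M a^H R_x a, M a^H R_x a' and ||b'||^2 a^H R_x a + M a'^H R_x a'.  The vector a
   is orthogonal to h~ and to every t_i, hence only the t_1 part of R_x sees it, and the
   cross term |a^H R_x a'|^2 cancels the t_1 part of a'^H R_x a'.  What remains of
   a'^H R_x a' is gamma2 times the squared norm of the projection of a' onto
   span{t_3, ..., t_N}; by Parseval this is ||a'||^2 - |h~^H a'|^2, and
   |h~^H a'|^2 = |h^H a'|^2 / ||h - (a~^H h) a~||^2 = (S1^2 + S2^2) / (K - (T^2 + R^2)/N). *)

From HB Require Import structures.
From mathcomp Require Import all_boot all_order all_algebra.
From mathcomp Require Import all_classical all_reals all_analysis.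
From mathcomp Require Import complex.
From mathcomp Require Import ring.
Import Order.TTheory GRing.Theory Num.Theory.
Local Open Scope ring_scope.
Local Open Scope complex_scope.
Set Implicit Arguments.
Unset Strict Implicit.
Unset Printing Implicit Defensive.

Section Hermitian.
Variable R : realType.
Local Notation C := R[i].

Lemma conjcM_cabs2 (z : C) : conjc z * z = (cabs2 z)%:C.
Proof.
by case: z => a b; apply/eqP; rewrite eq_complex /cabs2 /=; apply/andP; split; apply/eqP; ring.
Qed.

(* Restatements of conjc_real and rmorphM whose [conjc] and [%:C] are elaborated at a
   realType, so that they rewrite syntactically in the goals below. *)
Lemma conjc_realC (x : R) : conjc x%:C = x%:C.
Proof. by rewrite /= oppr0. Qed.

Lemma conjcM (y z : C) : conjc (y * z) = conjc y * conjc z.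
Proof. exact: rmorphM. Qed.

Lemma cabs2_ge0 (z : C) : 0 <= cabs2 z.
Proof. by rewrite addr_ge0 // sqr_ge0. Qed.

Lemma cabs2_eq0 (z : C) : (cabs2 z == 0) = (z == 0).
Proof.
case: z => a b; rewrite /cabs2 /= paddr_eq0 ?sqr_ge0 // !sqrf_eq0.
by rewrite eq_complex.
Qed.

Lemma adjmxM m n p (A : 'M[C]_(m, n)) (B : 'M[C]_(n, p)) :
  adjmx (A *m B) = adjmx B *m adjmx A.
Proof. by rewrite /adjmx (map_mxM conjc) trmx_mul. Qed.

Lemma adjmxD m n (A B : 'M[C]_(m, n)) : adjmx (A + B) = adjmx A + adjmx B.
Proof. by rewrite /adjmx (map_mxD conjc) linearD. Qed.

Lemma adjmxK m n (A : 'M[C]_(m, n)) : adjmx (adjmx A) = A.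
Proof. by apply/matrixP => i j; rewrite /adjmx !mxE conjcK. Qed.

Section InnerProduct.
Variable n : nat.
Implicit Types u v w : 'cV[C]_n.

Lemma cdotE u v : cdot u v = \sum_i conjc (u i 0) * v i 0.
Proof. by rewrite /cdot /adjmx mxE; apply: eq_bigr => i _; rewrite !mxE. Qed.

Lemma cdotC u v : cdot v u = conjc (cdot u v).
Proof.
by rewrite !cdotE rmorph_sum; apply: eq_bigr => i _; rewrite rmorphM /= conjcK mulrC.
Qed.

Lemma cdotDr u v w : cdot u (v + w) = cdot u v + cdot u w.
Proof. by rewrite /cdot mulmxDr [LHS]mxE. Qed.

Lemma cdotBr u v w : cdot u (v - w) = cdot u v - cdot u w.
Proof. by rewrite /cdot mulmxBr [LHS]mxE [X in _ + X]mxE. Qed.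

Lemma cdotZr u v (c : C) : cdot u (c *: v) = c * cdot u v.
Proof. by rewrite /cdot -scalemxAr [LHS]mxE. Qed.

Lemma cdot_sumr m u (F : 'I_m -> 'cV[C]_n) : cdot u (\sum_k F k) = \sum_k cdot u (F k).
Proof. by rewrite /cdot mulmx_sumr summxE. Qed.

Lemma cdotZl u v (c : C) : cdot (c *: u) v = conjc c * cdot u v.
Proof. by rewrite cdotC cdotZr rmorphM /= -cdotC. Qed.

Lemma cdotBl u v w : cdot (u - v) w = cdot u w - cdot v w.
Proof. by rewrite cdotC cdotBr rmorphB /= -!cdotC. Qed.

Lemma cdot_self u : cdot u u = (\sum_i cabs2 (u i 0))%:C.
Proof. by rewrite cdotE rmorph_sum; apply: eq_bigr => i _; rewrite conjcM_cabs2. Qed.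

Lemma cdot_self_eq0 u : (cdot u u == 0) = (u == 0).
Proof.
rewrite cdot_self (inj_eq (@complexI R)) psumr_eq0 => [|i _]; last exact: cabs2_ge0.
apply/idP/eqP => [/allP u0|->].
  apply/matrixP => i j; rewrite (ord1 j) mxE; apply/eqP.
  by rewrite -cabs2_eq0; exact: (u0 i (mem_index_enum i)).
by apply/allP => i _ /=; rewrite mxE cabs2_eq0.
Qed.

Lemma cnorm_real u : conjc (cnorm u) = cnorm u.
Proof.
by rewrite /cnorm cdot_self sqrtc_sqrtr ?conjc_real // ler0c sumr_ge0 // => i _; apply: cabs2_ge0.
Qed.

Lemma cnorm_sqr u : cnorm u ^+ 2 = cdot u u.
Proof. exact: sqr_sqrtc. Qed.

Lemma cdot_normalizel u v : cdot ((cnorm u)^-1 *: u) v = (cnorm u)^-1 * cdot u v.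
Proof. by rewrite cdotZl conjc_inv cnorm_real. Qed.

Lemma cdot_normalize u : u != 0 ->
  cdot ((cnorm u)^-1 *: u) ((cnorm u)^-1 *: u) = 1.
Proof.
rewrite -cdot_self_eq0 -cnorm_sqr sqrf_eq0 => u0.
by rewrite cdot_normalizel cdotZr -cnorm_sqr mulrA -expr2 exprVn mulVf // expf_neq0.
Qed.

Lemma cdot_normalizel_sqr u v :
  let y := cdot ((cnorm u)^-1 *: u) v in conjc y * y = conjc (cdot u v) * cdot u v / cdot u u.
Proof.
by rewrite /= cdot_normalizel rmorphM /= conjc_inv cnorm_real -cnorm_sqr -exprVn; ring.
Qed.

Lemma mxtrace_outer m (p r : 'cV[C]_m) (q s : 'cV[C]_n) (X : 'M[C]_n) :
  \tr (adjmx (p *m adjmx q) *m (r *m adjmx s) *m X) = cdot p r * cdot s (X *m q).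
Proof.
rewrite adjmxM adjmxK !mulmxA -(mulmxA q) (mx11_scalar (adjmx p *m r)) mul_mx_scalar.
rewrite -!scalemxAl mxtraceZ; congr (_ * _).
by rewrite -!mulmxA mxtrace_mulC /mxtrace big_ord1 /cdot !mulmxA.
Qed.

Lemma mxtrace_outerDl m (p1 p2 r : 'cV[C]_m) (q1 q2 s : 'cV[C]_n) (X : 'M[C]_n) :
  \tr (adjmx (p1 *m adjmx q1 + p2 *m adjmx q2) *m (r *m adjmx s) *m X) =
  cdot p1 r * cdot s (X *m q1) + cdot p2 r * cdot s (X *m q2).
Proof. by rewrite adjmxD !mulmxDl mxtraceD !mxtrace_outer. Qed.

Lemma mxtrace_outerD m (p1 p2 : 'cV[C]_m) (q1 q2 : 'cV[C]_n) (X : 'M[C]_n) :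
  \tr (adjmx (p1 *m adjmx q1 + p2 *m adjmx q2) *m (p1 *m adjmx q1 + p2 *m adjmx q2) *m X) =
  cdot p1 p1 * cdot q1 (X *m q1) + cdot p2 p1 * cdot q1 (X *m q2)
  + (cdot p1 p2 * cdot q2 (X *m q1) + cdot p2 p2 * cdot q2 (X *m q2)).
Proof. by rewrite mulmxDr mulmxDl mxtraceD !mxtrace_outerDl. Qed.

Lemma outer_mulmx (p q v : 'cV[C]_n) : (p *m adjmx q) *m v = cdot q v *: p.
Proof. by rewrite -mulmxA (mx11_scalar (adjmx q *m v)) mul_mx_scalar. Qed.

Section OrthonormalFamily.
Variables (m : nat) (t : 'I_m -> 'cV[C]_n).
Hypothesis t_orthonormal : forall k l, cdot (t k) (t l) = (k == l)%:R.

Lemma cdot_orthonormal_sum l (c : 'I_m -> C) : cdot (t l) (\sum_k c k *: t k) = c l.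
Proof.
rewrite cdot_sumr (bigD1 l) //= cdotZr t_orthonormal eqxx mulr1 big1 ?addr0 // => k kl.
by rewrite cdotZr t_orthonormal eq_sym (negbTE kl) mulr0.
Qed.

Lemma parseval_orthocomplement u v (c : 'I_m -> C) :
  cdot u u = 1 -> (forall k, cdot u (t k) = 0) ->
  v - cdot u v *: u = \sum_k c k *: t k ->
  \sum_k cdot v (t k) * cdot (t k) v = cdot v v - conjc (cdot u v) * cdot u v.
Proof.
move=> uu1 ut0 /eqP; rewrite subr_eq => /eqP vE.
have tv k : cdot (t k) v = c k.
  by rewrite vE cdotDr cdotZr (cdotC u) ut0 conjc0 mulr0 addr0 cdot_orthonormal_sum.
have -> : cdot v v = cdot v (\sum_k c k *: t k + cdot u v *: u) by rewrite -vE.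
rewrite cdotDr cdotZr cdot_sumr (cdotC u v) [cdot u v * _]mulrC addrK.
by apply: eq_bigr => k _; rewrite cdotZr tv (cdotC (t k)) tv mulrC.
Qed.

End OrthonormalFamily.
End InnerProduct.
End Hermitian.

Section ComplexDerivative.
Variable R : realType.
Local Notation C := R[i].
Implicit Types (f g : R -> C) (x : R) (df dg : C).

Lemma scaleRE (a b : R) : a *: b = a * b.
Proof. by []. Qed.

Definition is_cderive f x df : Prop :=
  is_derive x 1 (fun t => complex.Re (f t)) (complex.Re df) /\
  is_derive x 1 (fun t => complex.Im (f t)) (complex.Im df).

Lemma cderive_val f x df : is_cderive f x df -> cderive f x = df.
Proof. by case: df => a b [da db]; rewrite /cderive !derive1E !derive_val. Qed.

Lemma is_cderiveM f g x df dg : is_cderive f x df -> is_cderive g x dg ->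
  is_cderive (fun t => f t * g t) x (df * g x + f x * dg).
Proof.
move=> [fr fi] [gr gi]; split.
- have -> : (fun t => complex.Re (f t * g t)) =
    (fun t => complex.Re (f t)) * (fun t => complex.Re (g t))
    - (fun t => complex.Im (f t)) * (fun t => complex.Im (g t)).
    by apply/funext => t; rewrite !fctE; case: (f t) (g t) => [a b] [c d].
  apply: is_derive_eq (is_deriveB (is_deriveM fr gr) (is_deriveM fi gi)) _.
  clear fr fi gr gi; case: (f x) (g x) df dg => [a b] [c d] [p q] [r s].
  by rewrite /= !scaleRE; ring.
- have -> : (fun t => complex.Im (f t * g t)) =
    (fun t => complex.Re (f t)) * (fun t => complex.Im (g t))
    + (fun t => complex.Im (f t)) * (fun t => complex.Re (g t)).
    by apply/funext => t; rewrite !fctE; case: (f t) (g t) => [a b] [c d].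
  apply: is_derive_eq (is_deriveD (is_deriveM fr gi) (is_deriveM fi gr)) _.
  clear fr fi gr gi; case: (f x) (g x) df dg => [a b] [c d] [p q] [r s].
  by rewrite /= !scaleRE; ring.
Qed.

Lemma is_cderive_conj f x df : is_cderive f x df ->
  is_cderive (fun t => conjc (f t)) x (conjc df).
Proof.
move=> [fr fi]; split.
- have -> : (fun t => complex.Re (conjc (f t))) = (fun t => complex.Re (f t)).
    by apply/funext => t; case: (f t).
  by case: df fr fi.
- have -> : (fun t => complex.Im (conjc (f t))) = - (fun t => complex.Im (f t)).
    by apply/funext => t; rewrite fctE; case: (f t).
  by case: df fr fi => a b /= _ fi; apply: is_deriveN.
Qed.

Lemma is_cderive_expj (g : R -> R) x (dg : R) : is_derive x 1 g dg ->
  is_cderive (fun t => expj (g t)) x (dg%:C * 'i * expj (g x)).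
Proof.
move=> gd; split.
- apply: is_derive_eq (is_derive1_comp (is_derive_cos (g x)) gd) _.
  by rewrite /expj /=; ring.
- apply: is_derive_eq (is_derive1_comp (is_derive_sin (g x)) gd) _.
  by rewrite /expj /=; ring.
Qed.

End ComplexDerivative.

Section SteeringVector.
Variable R : realType.
Local Notation C := R[i].
Implicit Types (n : nat) (theta x : R).

Lemma sum_quadratic_nat n (a b c : R) :
  \sum_(k < n) (a + b * k%:R + c * k%:R ^+ 2) =
  a * n%:R + b * (n%:R * (n%:R - 1) / 2) + c * (n%:R * (n%:R - 1) * (2 * n%:R - 1) / 6).
Proof.
elim: n => [|n IH]; first by rewrite big_ord0 !mul0r !mulr0 !addr0.
rewrite big_ord_recr /= IH -addn1 natrD /=.
by field.
Qed.

(* [fcoef n theta k] and [fcoef' n theta k] unfold to [pi * sin theta * steer_offset n k]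
   and [pi * cos theta * steer_offset n k]. *)
Definition steer_offset n (k : nat) : R := (n%:R - (2 * k.+1 - 1)%:R) / 2.

Lemma steer_offsetE n k : steer_offset n k = (n%:R - 1) / 2 - k%:R.
Proof.
rewrite /steer_offset.
have -> : (2 * k.+1 - 1 = 2 * k + 1)%N by rewrite mulnS addnC addnS subn1 addn1.
by rewrite natrD natrM; field.
Qed.

Lemma sum_steer_offset n : \sum_(k < n) steer_offset n k = 0.
Proof.
rewrite (eq_bigr (fun k : 'I_n => (n%:R - 1) / 2 + (-1) * k%:R + 0 * k%:R ^+ 2)).
  by rewrite sum_quadratic_nat; field.
by move=> k _; rewrite steer_offsetE; ring.
Qed.

Lemma sum_steer_offset_sqr n :
  \sum_(k < n) steer_offset n k ^+ 2 = n%:R * (n%:R ^+ 2 - 1) / 12.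
Proof.
rewrite (eq_bigr (fun k : 'I_n => ((n%:R - 1) / 2) ^+ 2 + (1 - n%:R) * k%:R + 1 * k%:R ^+ 2)).
  by rewrite sum_quadratic_nat; field.
by move=> k _; rewrite steer_offsetE; field.
Qed.

Lemma conjc_expjM x : conjc (expj x) * expj x = 1.
Proof.
apply/eqP; rewrite eq_complex /= -(cos2Dsin2 x).
by apply/andP; split; apply/eqP; ring.
Qed.

Lemma conjc_expjN x : conjc (expj (- x)) = expj x.
Proof. by rewrite /expj /= cosN sinN opprK. Qed.

Definition dsteer n theta : 'cV[C]_n :=
  \col_(k < n) ((- fcoef' n theta k)%:C * 'i * expj (- fcoef n theta k)).

Lemma is_derive_fcoef n k x : is_derive x 1 (fun t => - fcoef n t k) (- fcoef' n x k).
Proof.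
have -> : (fun t => - fcoef n t k) = - ((pi * steer_offset n k) \*: (sin : R -> R)).
  by apply/funext => t; rewrite !fctE /= scaleRE /fcoef /steer_offset; ring.
apply: is_derive_eq (is_deriveN (is_deriveZ _ (is_derive_sin x))) _.
by rewrite scaleRE /fcoef' /steer_offset; ring.
Qed.

Lemma dAmxE M N theta :
  dAmx M N theta =
  dsteer M theta *m adjmx (steer N theta) + steer M theta *m adjmx (dsteer N theta).
Proof.
apply/matrixP => m i; rewrite /dAmx /adjmx !mxE !big_ord1 !mxE.
have -> : (fun x => Amx M N x m i) =
    (fun x => expj (- fcoef M x m) * conjc (expj (- fcoef N x i))).
  by apply/funext => x; rewrite /Amx /adjmx !mxE big_ord1 !mxE.
apply/cderive_val/is_cderiveM; first exact/is_cderive_expj/is_derive_fcoef.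
exact/is_cderive_conj/is_cderive_expj/is_derive_fcoef.
Qed.

End SteeringVector.

Arguments steer_offset {R} n k.

Section SteeringInnerProducts.
Variable R : realType.
Local Notation C := R[i].
Implicit Types (n : nat) (theta : R).

Lemma cabs2_mulI_expj (a x : R) : cabs2 (a%:C * 'i * expj x) = a ^+ 2.
Proof.
transitivity (a ^+ 2 * (cos x ^+ 2 + sin x ^+ 2)); first by rewrite /cabs2 /=; ring.
by rewrite cos2Dsin2 mulr1.
Qed.

Lemma cdot_steer n theta : cdot (steer n theta) (steer n theta) = n%:R.
Proof.
rewrite cdotE (eq_bigr (fun=> 1)) => [|k _]; last by rewrite !mxE conjc_expjM.
by rewrite sumr_const card_ord.
Qed.

Lemma cdot_steer_dsteer n theta : cdot (steer n theta) (dsteer n theta) = 0.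
Proof.
rewrite cdotE (eq_bigr (fun k : 'I_n => (- fcoef' n theta k)%:C * 'i)) => [|k _]; last first.
  by rewrite !mxE mulrCA conjc_expjM mulr1.
rewrite -mulr_suml -rmorph_sum sumrN -mulr_sumr sum_steer_offset.
by rewrite mulr0 oppr0 mul0r.
Qed.

Lemma cdot_dsteer n theta : cdot (dsteer n theta) (dsteer n theta) =
  (pi ^+ 2 * cos theta ^+ 2 * n%:R * (n%:R ^+ 2 - 1) / 12)%:C.
Proof.
rewrite cdot_self (eq_bigr (fun k : 'I_n => (pi * cos theta) ^+ 2 * steer_offset n k ^+ 2)).
  by rewrite -mulr_sumr sum_steer_offset_sqr; congr (_%:C); ring.
by move=> k _; rewrite mxE cabs2_mulI_expj /fcoef' /steer_offset; ring.
Qed.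

Lemma cdot_steer_vec n theta (h : 'cV[C]_n) :
  cdot (steer n theta) h = Complex (\sum_(k < n) rcoef theta h k) (\sum_(k < n) tcoef theta h k).
Proof.
rewrite cdotE; apply/eqP; rewrite eq_complex !raddf_sum.
by apply/andP; split; apply/eqP; apply: eq_bigr => k _; rewrite mxE conjc_expjN.
Qed.

Lemma cdot_dsteer_vec n theta (h : 'cV[C]_n) :
  cdot (dsteer n theta) h = Complex (\sum_(k < n) - fcoef' n theta k * tcoef theta h k)
                                    (\sum_(k < n) fcoef' n theta k * rcoef theta h k).
Proof.
rewrite cdotE; apply/eqP; rewrite eq_complex !raddf_sum.
apply/andP; split; apply/eqP; apply: eq_bigr => k _;
  rewrite !mxE /rcoef /tcoef /expj /= cosN sinN; case: (h k 0) => p q /=; ring.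
Qed.

End SteeringInnerProducts.

Section FisherTraces.
Variable R : realType.
Local Notation C := R[i].
Variables (M N : nat) (theta : R).
Local Notation a := (steer N theta).
Local Notation a' := (dsteer N theta).

Lemma mxtrace_AhA (X : 'M[C]_N) :
  \tr (adjmx (Amx M N theta) *m Amx M N theta *m X) = M%:R * cdot a (X *m a).
Proof. by rewrite /Amx mxtrace_outer cdot_steer. Qed.

Lemma mxtrace_dAhA (X : 'M[C]_N) :
  \tr (adjmx (dAmx M N theta) *m Amx M N theta *m X) = M%:R * cdot a (X *m a').
Proof.
rewrite dAmxE /Amx mxtrace_outerDl (cdotC (steer M theta)) cdot_steer_dsteer.
by rewrite conjc0 mul0r add0r cdot_steer.
Qed.

Lemma mxtrace_dAhdA (X : 'M[C]_N) :
  \tr (adjmx (dAmx M N theta) *m dAmx M N theta *m X) =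
  (pi ^+ 2 * cos theta ^+ 2 * M%:R * (M%:R ^+ 2 - 1) / 12)%:C * cdot a (X *m a)
  + M%:R * cdot a' (X *m a').
Proof.
rewrite dAmxE mxtrace_outerD cdot_dsteer cdot_steer cdot_steer_dsteer.
by rewrite (cdotC (steer M theta)) cdot_steer_dsteer conjc0 !mul0r addr0 add0r.
Qed.

End FisherTraces.

Section Precoder.
Variable R : realType.
Local Notation C := R[i].

Definition hperp N (theta : R) (h : 'cV[C]_N) : 'cV[C]_N :=
  h - cdot (atil N theta) h *: atil N theta.

Lemma htilE N (theta : R) (h : 'cV[C]_N) :
  htil theta h = (cnorm (hperp theta h))^-1 *: hperp theta h.
Proof. by []. Qed.

Lemma cdot_Rx N (theta : R) (h : 'cV[C]_N) alpha beta gamma1 gamma2 t u v :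
  let t1 := t1vec theta h alpha beta in
  cdot u (Rxmx theta h alpha beta gamma1 gamma2 t *m v) =
  gamma1%:C * (cdot u t1 * cdot t1 v) + gamma2%:C * \sum_k cdot u (t k) * cdot (t k) v.
Proof.
rewrite /Rxmx mulmxDl cdotDr -!scalemxAl !cdotZr outer_mulmx cdotZr mulmx_suml cdot_sumr.
rewrite [cdot _ v * _]mulrC; congr (_ + _ * _).
by apply: eq_bigr => k _; rewrite outer_mulmx cdotZr mulrC.
Qed.

Variables (M N : nat) (theta : R) (h : 'cV[C]_N) (alpha beta : C) (gamma1 gamma2 : R).
Variable t : 'I_(N - 2) -> 'cV[C]_N.
Hypothesis N_gt0 : (0 < N)%N.
Hypothesis h_indep : ~ exists c : C, h = c *: steer N theta.
Hypothesis t_orthonormal : forall k l, cdot (t k) (t l) = (k == l)%:R.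
Hypothesis atil_t : forall k, cdot (atil N theta) (t k) = 0.
Hypothesis htil_t : forall k, cdot (htil theta h) (t k) = 0.
Hypothesis t_span : forall v, cdot (atil N theta) v = 0 -> cdot (htil theta h) v = 0 ->
  exists c : 'I_(N - 2) -> C, v = \sum_k c k *: t k.

Local Notation a := (steer N theta).
Local Notation a' := (dsteer N theta).
Local Notation t1 := (t1vec theta h alpha beta).
Local Notation Rx := (Rxmx theta h alpha beta gamma1 gamma2 t).
Local Notation Rs := (\sum_(k < N) rcoef theta h k).
Local Notation Ts := (\sum_(k < N) tcoef theta h k).
Local Notation Ks := (\sum_(k < N) kcoef h k).
Local Notation S1 := (\sum_(k < N) - fcoef' N theta k * tcoef theta h k).
Local Notation S2 := (\sum_(k < N) fcoef' N theta k * rcoef theta h k).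

Lemma steer_neq0 : a != 0.
Proof. by rewrite -cdot_self_eq0 cdot_steer pnatr_eq0 -lt0n. Qed.

Lemma cnorm_steer_neq0 : cnorm a != 0.
Proof. by rewrite -sqrf_eq0 cnorm_sqr cdot_self_eq0 steer_neq0. Qed.

Lemma cdot_atil : cdot (atil N theta) (atil N theta) = 1.
Proof. exact: cdot_normalize steer_neq0. Qed.

Lemma cdot_steerl v : cdot a v = cnorm a * cdot (atil N theta) v.
Proof. by rewrite /atil cdot_normalizel mulrA mulfV ?mul1r // cnorm_steer_neq0. Qed.

Lemma cdot_atil_dsteer : cdot (atil N theta) a' = 0.
Proof. by rewrite /atil cdot_normalizel cdot_steer_dsteer mulr0. Qed.

Lemma cdot_atil_hperp : cdot (atil N theta) (hperp theta h) = 0.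
Proof. by rewrite cdotBr cdotZr cdot_atil mulr1 subrr. Qed.

Lemma hperp_neq0 : hperp theta h != 0.
Proof.
apply/eqP => /eqP; rewrite subr_eq0 => /eqP hE; apply: h_indep.
by exists (cdot (atil N theta) h / cnorm a); rewrite -scalerA {1}hE.
Qed.

Lemma cdot_htil : cdot (htil theta h) (htil theta h) = 1.
Proof. exact: cdot_normalize hperp_neq0. Qed.

Lemma cdot_atil_htil : cdot (atil N theta) (htil theta h) = 0.
Proof. by rewrite htilE cdotZr cdot_atil_hperp mulr0. Qed.

Lemma cdot_hperp :
  cdot (hperp theta h) (hperp theta h) = (Ks - N%:R^-1 * (Ts ^+ 2 + Rs ^+ 2))%:C.
Proof.
rewrite {1}/hperp cdotBl cdotZl cdot_atil_hperp mulr0 subr0.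
rewrite cdotBr cdotZr (cdotC (atil N theta) h) mulrC cdot_normalizel_sqr.
rewrite cdot_steer cdot_steer_vec conjcM_cabs2 cdot_self -(rmorph_nat (real_complex R)).
by rewrite -fmorph_div -rmorphB /cabs2 /=; congr (_%:C); ring.
Qed.

Lemma htil_dsteer_sqr :
  conjc (cdot (htil theta h) a') * cdot (htil theta h) a' =
  ((S1 ^+ 2 + S2 ^+ 2) / (Ks - N%:R^-1 * (Ts ^+ 2 + Rs ^+ 2)))%:C.
Proof.
rewrite htilE cdot_normalizel_sqr cdot_hperp.
have -> : cdot (hperp theta h) a' = cdot h a'.
  by rewrite /hperp cdotBl cdotZl cdot_atil_dsteer mulr0 subr0.
rewrite (cdotC a' h) conjcK [cdot a' h * _]mulrC conjcM_cabs2 cdot_dsteer_vec.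
by rewrite -fmorph_div.
Qed.

Lemma dsteer_parseval :
  \sum_k cdot a' (t k) * cdot (t k) a' =
  cdot a' a' - conjc (cdot (htil theta h) a') * cdot (htil theta h) a'.
Proof.
have [c ac] : exists c : 'I_(N - 2) -> C,
    a' - cdot (htil theta h) a' *: htil theta h = \sum_k c k *: t k.
  apply: t_span; first by rewrite cdotBr cdotZr cdot_atil_dsteer cdot_atil_htil mulr0 subrr.
  by rewrite cdotBr cdotZr cdot_htil mulr1 subrr.
exact: parseval_orthocomplement t_orthonormal _ _ _ cdot_htil htil_t ac.
Qed.

Lemma cdot_steer_t1 : cdot a t1 = cnorm a * alpha.
Proof.
rewrite cdot_steerl /t1vec cdotDr (cdotZr _ _ alpha) (cdotZr _ _ beta).
by rewrite cdot_atil cdot_atil_htil mulr0 addr0 mulr1.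
Qed.

Lemma cdot_Rx_steerl v : cdot a (Rx *m v) = gamma1%:C * (cnorm a * alpha * cdot t1 v).
Proof.
rewrite cdot_Rx cdot_steer_t1 big1 ?mulr0 ?addr0 // => k _.
by rewrite cdot_steerl atil_t mulr0 mul0r.
Qed.

Lemma cdot_Rx_steer : cdot a (Rx *m a) = (gamma1 * N%:R * cabs2 alpha)%:C.
Proof.
rewrite cdot_Rx_steerl (cdotC a t1) cdot_steer_t1 rmorphM /= cnorm_real.
rewrite !rmorphM /= rmorph_nat -conjcM_cabs2 -[N%:R](cdot_steer N theta) -cnorm_sqr.
by ring.
Qed.

Lemma cdot_Rx_dsteer :
  cdot a' (Rx *m a') = gamma1%:C * (conjc (cdot t1 a') * cdot t1 a')
  + gamma2%:C * (pi ^+ 2 * cos theta ^+ 2 * N%:R * (N%:R ^+ 2 - 1) / 12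
                 - (S1 ^+ 2 + S2 ^+ 2) / (Ks - N%:R^-1 * (Ts ^+ 2 + Rs ^+ 2)))%:C.
Proof.
by rewrite cdot_Rx dsteer_parseval cdot_dsteer htil_dsteer_sqr -rmorphB (cdotC t1 a').
Qed.

Lemma cdot_Rx_cross_sqr :
  `|cdot a (Rx *m a')| ^+ 2 =
  gamma1%:C * (gamma1 * N%:R * cabs2 alpha)%:C * (conjc (cdot t1 a') * cdot t1 a').
Proof.
rewrite cdot_Rx_steerl sqr_normc !conjcM conjc_realC cnorm_real.
rewrite !rmorphM /= rmorph_nat.
by rewrite -conjcM_cabs2 -[N%:R](cdot_steer N theta) -cnorm_sqr; ring.
Qed.

Definition fisher_info : R :=
  pi ^+ 2 * cos theta ^+ 2 * M%:R * (M%:R ^+ 2 - 1) / 12 * (gamma1 * N%:R * cabs2 alpha)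
  + M%:R * gamma2 * (pi ^+ 2 * cos theta ^+ 2 * N%:R * (N%:R ^+ 2 - 1) / 12
                     - (S1 ^+ 2 + S2 ^+ 2) / (Ks - N%:R^-1 * (Ts ^+ 2 + Rs ^+ 2))).

Lemma CRBden_precoder c3 L : CRBden M theta Rx c3 L =
  (2 * cabs2 c3 * L%:R * (M%:R * (gamma1 * N%:R * cabs2 alpha) * fisher_info))%:C.
Proof.
rewrite /CRBden; cbv zeta.
rewrite mxtrace_dAhA normrM exprMn normr_nat cdot_Rx_cross_sqr.
rewrite mxtrace_AhA mxtrace_dAhdA cdot_Rx_steer cdot_Rx_dsteer -add_Re2_Im2 -/(cabs2 c3).
rewrite /fisher_info; move: (gamma1 * N%:R * cabs2 alpha) => x.
move: (pi ^+ 2 * cos theta ^+ 2 * M%:R * (M%:R ^+ 2 - 1) / 12) => nb.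
move: (pi ^+ 2 * cos theta ^+ 2 * N%:R * (N%:R ^+ 2 - 1) / 12 - _) => w.
by ring.
Qed.

Lemma CRB_precoder sigmaR c3 L : CRB M theta Rx sigmaR c3 L =
  (sigmaR ^+ 2 * (M%:R * (gamma1 * N%:R * cabs2 alpha)))%:C / CRBden M theta Rx c3 L.
Proof. by rewrite /CRB; cbv zeta; rewrite mxtrace_AhA cdot_Rx_steer; ring. Qed.

End Precoder.

Theorem lemma1 (R : realType) (N M : nat) (theta : R) (h : 'cV[R[i]]_N)
    (alpha beta : R[i]) (P tau sigmaR : R) (c3 : R[i]) (L : nat)
    (t : 'I_(N - 2) -> 'cV[R[i]]_N) :
  (3 <= N)%N -> (2 <= M)%N ->
  ~ (exists c : R[i], h = c *: steer N theta) ->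
  0 < P -> 0 <= tau <= 1 -> 0 < sigmaR -> c3 != 0 -> (1 <= L)%N ->
  (* t_3, ..., t_N : an orthonormal basis of the orthogonal complement of
     span{a~, h~} *)
  (forall k l, cdot (t k) (t l) = (k == l)%:R) ->
  (forall k, cdot (atil N theta) (t k) = 0) ->
  (forall k, cdot (htil theta h) (t k) = 0) ->
  (forall v : 'cV[R[i]]_N, cdot (atil N theta) v = 0 ->
     cdot (htil theta h) v = 0 ->
     exists c : 'I_(N - 2) -> R[i], v = \sum_(k < N - 2) c k *: t k) ->
  let gamma1 := P * tau in
  let gamma2 := (1 - tau) * P / (N - 2)%:R in
  let Q := sigmaR ^+ 2 / (2 * cabs2 c3 * L%:R) in
  let Rx := Rxmx theta h alpha beta gamma1 gamma2 t in
  (* CRB(theta) is well defined (its denominator is nonzero) *)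
  CRBden M theta Rx c3 L != 0 ->
  let nb2 := pi ^+ 2 * cos theta ^+ 2 * M%:R * (M%:R ^+ 2 - 1) / 12 in
  let na2 := pi ^+ 2 * cos theta ^+ 2 * N%:R * (N%:R ^+ 2 - 1) / 12 in
  let Rs := \sum_(k < N) rcoef theta h k in
  let Ts := \sum_(k < N) tcoef theta h k in
  let Ks := \sum_(k < N) kcoef h k in
  let S1 := \sum_(k < N) - fcoef' N theta k * tcoef theta h k in
  let S2 := \sum_(k < N) fcoef' N theta k * rcoef theta h k in
  CRB M theta Rx sigmaR c3 L =
  (Q / (gamma1 * nb2 * N%:R * cabs2 alpha
        + gamma2 * M%:R * (na2 - (S1 ^+ 2 + S2 ^+ 2)
                                  / (Ks - (N%:R)^-1 * (Ts ^+ 2 + Rs ^+ 2)))))%:C.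
Proof.
move=> N3 _ h_indep _ _ _ _ _ t_on atil_t htil_t t_span gamma1 gamma2 Q Rx den.
move=> nb2 na2 Rs Ts Ks S1 S2; clearbody gamma1 gamma2.
have N_gt0 : (0 < N)%N by apply: leq_trans N3.
rewrite CRB_precoder //.
rewrite (CRBden_precoder _ _ _ _ _ N_gt0 h_indep t_on atil_t htil_t t_span) in den *.
have {den} : 2 * cabs2 c3 * L%:R * (M%:R * (gamma1 * N%:R * cabs2 alpha)
                                    * fisher_info M theta h alpha gamma1 gamma2) != 0.
  by apply: contraNneq den => ->; rewrite rmorph0.
rewrite !mulf_eq0 !negb_or.
move=> /andP[/andP[/andP[_ c0] L0] /andP[/andP[M0 /andP[/andP[g0 N0] a0]] info0]].
rewrite -fmorph_div; congr (_%:C).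
have -> : gamma1 * nb2 * N%:R * cabs2 alpha + gamma2 * M%:R * (na2 - (S1 ^+ 2 + S2 ^+ 2)
           / (Ks - N%:R^-1 * (Ts ^+ 2 + Rs ^+ 2))) = fisher_info M theta h alpha gamma1 gamma2.
  by rewrite /fisher_info /nb2 /na2 /S1 /S2 /Ks /Ts /Rs; ring.
by rewrite /Q; field; rewrite info0 L0 c0 a0 N0 g0 M0.
Qed.
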